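(* Let $\varphi:[0,1]\to[0,1]$ be non-decreasing and continuously differentiable with $\varphi(0)=0$, $\varphi(1)=1$, and suppose $z\mapsto z\varphi(z)$ is convex. Consider the problem of finding a piecewise constant function $\psi$ on $[0,1]$ with $2$ pieces (i.e. constant on $[0,z)$ and on $[z,1]$ for some $z\in[0,1]$) such that $\psi\leq\varphi$ on $[0,1]$ and $\int_0^1(\varphi(t)-\psi(t))\,dt$ is minimal. Then the minimum is reached with a step $z$ satisfying $(1-z)\varphi'(z)=\varphi(z)$. *)

From Stdlib Require Import Reals.
From Coquelicot Require Import Coquelicot.
Open Scope R_scope.

Definition in01 (x : R) : Prop := 0 <= x <= 1.

Definition has_derivative_on01 (f f' : R -> R) : Prop :=
  forall x, in01 x ->
    filterlim (fun y => (f y - f x) / (y - x))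
      (within (fun y => in01 y /\ y <> x) (locally x)) (locally (f' x)).

Definition continuous_on01 (g : R -> R) : Prop :=
  forall x, in01 x -> filterlim g (within in01 (locally x)) (locally (g x)).

Definition C1_on01 (f f' : R -> R) : Prop :=
  has_derivative_on01 f f' /\ continuous_on01 f'.

Definition nondecreasing_on01 (f : R -> R) : Prop :=
  forall x y, in01 x -> in01 y -> x <= y -> f x <= f y.

Definition convex_on01 (h : R -> R) : Prop :=
  forall x y t, in01 x -> in01 y -> 0 <= t <= 1 ->
    h (t * x + (1 - t) * y) <= t * h x + (1 - t) * h y.

Definition step2 (z a b : R) (t : R) : R := if Rlt_dec t z then a else b.

Definition below_on01 (psi phi : R -> R) : Prop :=
  forall t, in01 t -> psi t <= phi t.

Definition gap (phi psi : R -> R) : R := RInt (fun t => phi t - psi t) 0 1.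

From Stdlib Require Import Reals Lra.
From Coquelicot Require Import Coquelicot.
Open Scope R_scope.

(* Since psi <= phi with phi(0) = 0 and phi nondecreasing, the best 2-step
   function with step z is 0 on [0,z) and phi(z) on [z,1], so the problem is to
   maximise the area G(z) = (1 - z) phi(z) of the rectangle under phi.  G is
   continuous on [0,1], vanishes at both ends and is positive near 1, so it
   attains its maximum at an interior point, where G' = (1 - z) phi' - phi
   vanishes. *)

Lemma ball_R (x e y : R) : ball x e y <-> Rabs (y - x) < e.
Proof. reflexivity. Qed.

Definition clamp01 (t : R) : R := Rmax 0 (Rmin 1 t).

Lemma clamp01_in01 t : in01 (clamp01 t).
Proof. unfold clamp01, in01, Rmax, Rmin; repeat destruct Rle_dec; lra. Qed.

Lemma clamp01_id t : in01 t -> clamp01 t = t.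
Proof. unfold clamp01, in01, Rmax, Rmin; intros; repeat destruct Rle_dec; lra. Qed.

Lemma clamp01_lipschitz x y : Rabs (clamp01 y - clamp01 x) <= Rabs (y - x).
Proof.
unfold clamp01, Rmax, Rmin, Rabs.
repeat destruct Rle_dec; repeat destruct Rcase_abs; lra.
Qed.

(* Extending a function continuous on [0,1] by constants outside [0,1] makes
   it continuous on R, so that the library results on R apply. *)
Lemma continuous_on01_clamp01 g x :
  continuous_on01 g -> continuous (fun t => g (clamp01 t)) x.
Proof.
intros Hg; apply filterlim_locally; intros eps.
destruct (proj1 (filterlim_locally _ _) (Hg _ (clamp01_in01 x)) eps) as [d Hd].
exists d; intros y Hy; apply ball_R in Hy.
apply Hd; [|exact (clamp01_in01 y)].
apply ball_R; eapply Rle_lt_trans; [apply clamp01_lipschitz | exact Hy].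
Qed.

Lemma continuous_on01_max g :
  continuous_on01 g -> exists x, in01 x /\ forall y, in01 y -> g y <= g x.
Proof.
intros Hg.
assert (Hcont : forall c, 0 <= c <= 1 -> continuity_pt (fun t => g (clamp01 t)) c).
{ intros c _; apply continuity_pt_filterlim, continuous_on01_clamp01, Hg. }
destruct (continuity_ab_maj _ 0 1 ltac:(lra) Hcont) as [x [Hmax Hx]].
exists x; split; [exact Hx|]; intros y Hy.
rewrite <- (clamp01_id y Hy), <- (clamp01_id x Hx); exact (Hmax y Hy).
Qed.

Lemma continuous_on01_ex_RInt g : continuous_on01 g -> ex_RInt g 0 1.
Proof.
intros Hg; apply (ex_RInt_ext (fun t => g (clamp01 t))).
- intros t Ht; rewrite Rmin_left, Rmax_right in Ht by lra.
  rewrite clamp01_id; [reflexivity | unfold in01; lra].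
- apply (ex_RInt_continuous (V := R_CompleteNormedModule)); intros z _.
  exact (continuous_on01_clamp01 g z Hg).
Qed.

Lemma continuous_on01_pos_near1 g :
  continuous_on01 g -> 0 < g 1 -> exists y, 0 < y < 1 /\ 0 < g y.
Proof.
intros Hg Hg1.
assert (H1 : in01 1) by (unfold in01; lra).
destruct (proj1 (filterlim_locally _ _) (Hg 1 H1) (mkposreal _ Hg1)) as [d Hd].
set (y := Rmax (1 / 2) (1 - d / 2)).
assert (Hy : 1 / 2 <= y < 1 /\ 1 - d / 2 <= y)
  by (pose proof (cond_pos d); unfold y, Rmax; destruct Rle_dec; lra).
exists y; split; [lra|].
assert (Hball : ball 1 d y) by (apply ball_R; rewrite Rabs_left; lra).
assert (Hy01 : in01 y) by (unfold in01; lra).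
specialize (Hd y Hball Hy01).
apply (proj1 (ball_R _ _ _)), Rabs_lt_between in Hd; simpl in Hd; lra.
Qed.

Lemma has_derivative_on01_quotient f f' x :
  has_derivative_on01 f f' -> in01 x -> forall eps, 0 < eps ->
  exists d, 0 < d /\ forall y, in01 y -> y <> x -> Rabs (y - x) < d ->
    Rabs ((f y - f x) / (y - x) - f' x) < eps.
Proof.
intros Hf Hx eps Heps.
destruct (proj1 (filterlim_locally _ _) (Hf x Hx) (mkposreal eps Heps)) as [d Hd].
exists d; split; [apply cond_pos|]; intros y Hy Hyx Hyd.
exact (Hd y Hyd (conj Hy Hyx)).
Qed.

Lemma has_derivative_on01_continuous f f' :
  has_derivative_on01 f f' -> continuous_on01 f.
Proof.
intros Hf x Hx; apply filterlim_locally; intros eps.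
destruct (has_derivative_on01_quotient f f' x Hf Hx 1 Rlt_0_1) as [d [Hd Hq]].
set (k := Rabs (f' x) + 1).
assert (Hk : 0 < k) by (pose proof (Rabs_pos (f' x)); unfold k; lra).
assert (Hdk : 0 < Rmin d (eps / k))
  by (apply Rmin_pos; [lra | apply Rdiv_lt_0_compat; [apply cond_pos | lra]]).
exists (mkposreal _ Hdk); intros y Hyd Hy; apply ball_R in Hyd; apply ball_R.
simpl in Hyd.
assert (Hyk : Rabs (y - x) < eps / k)
  by (eapply Rlt_le_trans; [exact Hyd | apply Rmin_r]).
apply (fun H => Rlt_le_trans _ _ _ H (Rmin_l _ _)) in Hyd.
destruct (Req_dec y x) as [->|Hyx]; [rewrite Rminus_diag, Rabs_R0; apply cond_pos|].
pose proof (Hq y Hy Hyx Hyd) as Hquot.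
assert (Hlip : Rabs (f y - f x) <= k * Rabs (y - x)).
{ replace (f y - f x) with ((f y - f x) / (y - x) * (y - x)) by (field; lra).
  rewrite Rabs_mult; apply Rmult_le_compat_r; [apply Rabs_pos|].
  pose proof (Rabs_triang_inv ((f y - f x) / (y - x)) (f' x)); unfold k; lra. }
apply (Rmult_lt_compat_l k) in Hyk; [|exact Hk].
replace (k * (eps / k)) with (pos eps) in Hyk by (field; lra); lra.
Qed.

Lemma has_derivative_on01_one_minus_mul f f' :
  has_derivative_on01 f f' ->
  has_derivative_on01 (fun y => (1 - y) * f y) (fun y => (1 - y) * f' y - f y).
Proof.
intros Hf x Hx.
apply filterlim_within_ext with (f := fun y => (1 - y) * ((f y - f x) / (y - x)) + - f x).
{ intros y [_ Hyx]; field; lra. }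
eapply (filterlim_comp_2 _ _ Rplus);
  [| apply filterlim_const | apply (filterlim_plus (V := R_NormedModule))].
eapply (filterlim_comp_2 _ _ Rmult);
  [| exact (Hf x Hx) | apply (filterlim_mult (K := R_AbsRing))].
apply (filterlim_filter_le_1 _ (filter_le_within _)).
apply (continuous_minus (V := R_NormedModule) (fun _ => 1) (fun y => y));
  [apply continuous_const | apply continuous_id].
Qed.

Lemma has_derivative_on01_interior_max g g' x :
  has_derivative_on01 g g' -> 0 < x < 1 ->
  (forall y, in01 y -> g y <= g x) -> g' x = 0.
Proof.
intros Hg Hx Hmax.
destruct (Req_dec (g' x) 0) as [|Hnz]; [assumption | exfalso].
assert (Hx01 : in01 x) by (unfold in01; lra).
destruct (has_derivative_on01_quotient g g' x Hg Hx01 (Rabs (g' x)) (Rabs_pos_lt _ Hnz))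
  as [d [Hd Hq]].
(* Near x the difference quotient has the sign of g' x, so moving from x in
   the direction of that sign increases g. *)
set (h := Rmin d (Rmin x (1 - x)) / 2).
assert (Hh : 0 < h /\ h < d /\ h < x /\ h < 1 - x).
{ pose proof (Rmin_l d (Rmin x (1 - x))); pose proof (Rmin_r d (Rmin x (1 - x))).
  pose proof (Rmin_l x (1 - x)); pose proof (Rmin_r x (1 - x)).
  assert (0 < Rmin d (Rmin x (1 - x))) by (repeat apply Rmin_pos; lra).
  unfold h; lra. }
set (y := if Rlt_dec 0 (g' x) then x + h else x - h).
assert (Hy : in01 y /\ y <> x /\ Rabs (y - x) = h).
{ unfold y; destruct Rlt_dec; [rewrite Rabs_right | rewrite Rabs_left];
  unfold in01; repeat split; lra. }
destruct Hy as [Hy [Hyx Hyh]].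
pose proof (Hq y Hy Hyx ltac:(lra)) as Hsign.
assert (Hgain : g y - g x = (g y - g x) / (y - x) * (y - x)) by (field; lra).
pose proof (Hmax y Hy).
apply Rabs_def2 in Hsign.
unfold y in *; destruct Rlt_dec;
  [rewrite Rabs_right in Hsign by lra | rewrite Rabs_left in Hsign by lra]; nra.
Qed.

Lemma gap_step2 phi z a b : continuous_on01 phi -> in01 z ->
  gap phi (step2 z a b) = RInt phi 0 1 - (a * z + b * (1 - z)).
Proof.
intros Hphi Hz; unfold in01 in Hz.
pose proof (continuous_on01_ex_RInt phi Hphi) as Hint.
pose proof (ex_RInt_Chasles_1 phi 0 z 1 Hz Hint) as Hint0z.
pose proof (ex_RInt_Chasles_2 phi 0 z 1 Hz Hint) as Hintz1.
assert (Hleft : is_RInt (fun t => phi t - step2 z a b t) 0 z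
                  (minus (RInt phi 0 z) (scal (z - 0) a))).
{ apply (is_RInt_ext (fun t => minus (phi t) a)).
  - intros t Ht; rewrite Rmin_left, Rmax_right in Ht by lra.
    unfold step2; destruct Rlt_dec; [reflexivity | lra].
  - apply (is_RInt_minus phi (fun _ => a) 0 z);
      [exact (RInt_correct _ _ _ Hint0z) | apply (is_RInt_const (V := R_NormedModule))]. }
assert (Hright : is_RInt (fun t => phi t - step2 z a b t) z 1
                   (minus (RInt phi z 1) (scal (1 - z) b))).
{ apply (is_RInt_ext (fun t => minus (phi t) b)).
  - intros t Ht; rewrite Rmin_left, Rmax_right in Ht by lra.
    unfold step2; destruct Rlt_dec; [lra | reflexivity].
  - apply (is_RInt_minus phi (fun _ => b) z 1);
      [exact (RInt_correct _ _ _ Hintz1) | apply (is_RInt_const (V := R_NormedModule))]. }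
unfold gap; rewrite (is_RInt_unique _ _ _ _ (is_RInt_Chasles _ _ _ _ _ _ Hleft Hright)).
rewrite <- (RInt_Chasles phi 0 z 1 Hint0z Hintz1).
unfold plus, minus, scal, opp; simpl; unfold mult, plus, opp; simpl; ring.
Qed.

Lemma step2_below_area phi z a b : phi 0 = 0 -> in01 z ->
  below_on01 (step2 z a b) phi -> a * z + b * (1 - z) <= (1 - z) * phi z.
Proof.
intros H0 Hz Hbelow; unfold in01 in Hz.
assert (Hb : b <= phi z).
{ pose proof (Hbelow z ltac:(unfold in01; lra)) as Hbz.
  unfold step2 in Hbz; destruct Rlt_dec; lra. }
assert (Ha : a * z <= 0).
{ destruct (Req_dec z 0) as [->|Hz0]; [lra|].
  pose proof (Hbelow 0 ltac:(unfold in01; lra)) as Ha0.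
  unfold step2 in Ha0; destruct Rlt_dec; [|lra].
  rewrite H0 in Ha0; nra. }
nra.
Qed.

Lemma step2_rectangle_below phi z :
  (forall t, in01 t -> 0 <= phi t) -> nondecreasing_on01 phi -> in01 z ->
  below_on01 (step2 z 0 (phi z)) phi.
Proof.
intros Hpos Hmono Hz t Ht; unfold step2.
destruct Rlt_dec; [exact (Hpos t Ht) | apply Hmono; auto; lra].
Qed.

Theorem proposition3 (phi phi' : R -> R) :
  (forall x, in01 x -> in01 (phi x)) ->
  nondecreasing_on01 phi ->
  C1_on01 phi phi' ->
  phi 0 = 0 -> phi 1 = 1 ->
  convex_on01 (fun z => z * phi z) ->
  exists z a b : R,
    in01 z /\
    below_on01 (step2 z a b) phi /\
    (forall z' a' b' : R, in01 z' -> below_on01 (step2 z' a' b') phi ->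
        gap phi (step2 z a b) <= gap phi (step2 z' a' b')) /\
    (1 - z) * phi' z = phi z.
Proof.
intros Hrange Hmono [Hderiv _] H0 H1 _.
pose proof (has_derivative_on01_continuous _ _ Hderiv) as Hcont.
pose proof (has_derivative_on01_one_minus_mul _ _ Hderiv) as Harea'.
destruct (continuous_on01_max _ (has_derivative_on01_continuous _ _ Harea'))
  as [x [Hx Hmax]].
destruct (continuous_on01_pos_near1 phi Hcont ltac:(lra)) as [y [Hy Hphiy]].
assert (Hinterior : 0 < x < 1).
{ assert (Hpos : 0 < (1 - x) * phi x)
    by (pose proof (Hmax y ltac:(unfold in01; lra)); nra).
  pose proof Hx as [[Hx0 | <-] [Hx1 | ->]]; lra. }
exists x, 0, (phi x); split; [exact Hx|]; split; [|split].
- apply step2_rectangle_below; [| exact Hmono | exact Hx].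
  intros t Ht; exact (proj1 (Hrange t Ht)).
- intros z' a' b' Hz' Hbelow.
  rewrite !gap_step2 by assumption.
  pose proof (step2_below_area phi z' a' b' H0 Hz' Hbelow).
  pose proof (Hmax z' Hz'); lra.
- pose proof (has_derivative_on01_interior_max _ _ x Harea' Hinterior Hmax); lra.
Qed.
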